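(* Let $a,b\ge1$, $P=[a]\times[b]$, fix an integer $k$ with $1-a\le k\le b-1$, and let $B=\{(i,j)\in P\colon j-i=k\}$. Then $\sum_{p\in B}\mathbb{1}_p\equiv c$, where $c=a(b-k)/(a+b)$ if $k\ge0$ and $c=b(a+k)/(a+b)$ if $k<0$.
   Context: $[a]\times[b]=\{(i,j)\colon 1\le i\le a,\ 1\le j\le b\}$ with $(i,j)\le(i',j')$ iff $i\le i'$ and $j\le j'$. $\mathcal{J}(P)$ is the set of order ideals of $P$. For $x\in P$, $I\in\mathcal{J}(P)$: $\mathbb{1}_x(I)=1$ if $x\in I$, else $0$; $T_x^+(I)=1$ if $x$ is a minimal element of $P\setminus I$, else $0$; $T_x^-(I)=1$ if $x$ is a maximal element of $I$, else $0$; $T_x=T_x^+-T_x^-$. For statistics $f,g\colon\mathcal{J}(P)\to\mathbb{R}$, $f\equiv g$ means there exist real constants $c_x$ ($x\in P$) with $f-g=\sum_{x\in P}c_xT_x$; a real number $c$ denotes the constant function $c$. *)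

From HB Require Import structures.
From mathcomp Require Import all_boot all_order all_algebra.
From mathcomp Require Import reals.
Set Implicit Arguments. Unset Strict Implicit. Unset Printing Implicit Defensive.
Import Order.TTheory GRing.Theory Num.Theory.
Local Open Scope ring_scope.

(* The poset [a] x [b]; element (i,j) : 'I_a * 'I_b stands for (i+1, j+1). *)
Definition elt (a b : nat) := ('I_a * 'I_b)%type.

Definition leP {a b : nat} (x y : elt a b) : bool :=
  ((x.1 <= y.1)%N && (x.2 <= y.2)%N).

Definition is_ideal {a b : nat} (I : {set elt a b}) : bool :=
  [forall x : elt a b, forall y : elt a b, ((y \in I) && leP x y) ==> (x \in I)].

Definition minimal_out {a b : nat} (x : elt a b) (I : {set elt a b}) : bool :=
  (x \notin I) && [forall y : elt a b, ((y \notin I) && leP y x) ==> (y == x)].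

Definition maximal_in {a b : nat} (x : elt a b) (I : {set elt a b}) : bool :=
  (x \in I) && [forall y : elt a b, ((y \in I) && leP x y) ==> (y == x)].

Definition indic {R : realType} {a b : nat} (x : elt a b) (I : {set elt a b}) : R :=
  (x \in I)%:R.
Definition Tplus {R : realType} {a b : nat} (x : elt a b) (I : {set elt a b}) : R :=
  (minimal_out x I)%:R.
Definition Tminus {R : realType} {a b : nat} (x : elt a b) (I : {set elt a b}) : R :=
  (maximal_in x I)%:R.
Definition toggle {R : realType} {a b : nat} (x : elt a b) (I : {set elt a b}) : R :=
  Tplus x I - Tminus x I.

Definition stat_equiv {R : realType} {a b : nat}
  (f g : {set elt a b} -> R) : Prop :=
  exists c : elt a b -> R, forall I : {set elt a b}, is_ideal I ->
    f I - g I = \sum_(x : elt a b) c x * toggle x I.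

(* Encode an ideal I of [a] x [b] by the down-set u of the grid {0..a} x {0..b}
   made of I shifted by (1,1) together with the two axis segments. A point of
   [a] x [b] is then addable (removable) exactly when the unit square below-left
   (above-right) of it has u as an outer (inner) corner, and for a down-set the
   outer minus the inner corner indicator of a square is the mixed second
   difference u(i,j+1) + u(i+1,j) - u(i,j) - u(i+1,j+1). So for a weight g of the
   content j - i that vanishes at b and -a (where the axes carry their only inner
   corners), sum_x g(x) T_x pairs g with the mixed difference of u. Summing by
   parts, the shifted copy of I contributes sum_{x in I} (Delta g)(x), while the
   axes contribute a constant, read off at I = empty as g(0). Taking for g the
   Green function of Delta with pole k gives the theorem, with c = -g(0). *)

From Pilot Require Import Defs.
From HB Require Import structures.
From mathcomp Require Import all_boot all_order all_algebra.
From mathcomp Require Import reals.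
From mathcomp Require Import zify ring.
Import Order.TTheory GRing.Theory Num.Theory.

Set Implicit Arguments. Unset Strict Implicit. Unset Printing Implicit Defensive.
Local Open Scope ring_scope.

Section GridSums.
Variable R : nmodType.
Implicit Types (f : nat -> R) (F : nat -> nat -> R).

Lemma sum_nat_recl0 f n : f 0%N = 0 ->
  \sum_(0 <= i < n.+1) f i = \sum_(0 <= i < n) f i.+1.
Proof. by move=> f0; rewrite big_nat_recl // f0 add0r. Qed.

Lemma sum_nat_recr0 f n : f n = 0 ->
  \sum_(0 <= i < n.+1) f i = \sum_(0 <= i < n) f i.
Proof. by move=> fn; rewrite big_nat_recr //= fn addr0. Qed.

Lemma sum_grid_recl0 F m n : (forall j, F 0%N j = 0) -> (forall i, F i 0%N = 0) ->
  \sum_(0 <= i < m.+1) \sum_(0 <= j < n.+1) F i j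
  = \sum_(0 <= i < m) \sum_(0 <= j < n) F i.+1 j.+1.
Proof.
move=> F0j Fi0; rewrite sum_nat_recl0 /=; last by rewrite big1.
by apply: eq_bigr => i _; rewrite sum_nat_recl0.
Qed.

Lemma sum_grid_recr0 F m n : (forall j, F m j = 0) -> (forall i, F i n = 0) ->
  \sum_(0 <= i < m.+1) \sum_(0 <= j < n.+1) F i j
  = \sum_(0 <= i < m) \sum_(0 <= j < n) F i j.
Proof.
move=> Fmj Fin; rewrite sum_nat_recr0 /=; last by rewrite big1.
by apply: eq_bigr => i _; rewrite sum_nat_recr0.
Qed.

Lemma sum_elt {a b : nat} F :
  \sum_(x : elt a b) F x.1 x.2 = \sum_(0 <= i < a) \sum_(0 <= j < b) F i j.
Proof.
rewrite -(pair_big predT predT (fun (i : 'I_a) (j : 'I_b) => F i j)) /= big_mkord.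
by apply: eq_bigr => i _; rewrite big_mkord.
Qed.

End GridSums.

Section CrossPairing.
Variable R : comPzRingType.
Implicit Types (F h u v w : nat -> nat -> R).

Definition cross_diff F i j : R := F i j.+1 + F i.+1 j - F i j - F i.+1 j.+1.

Definition cross_pairing m n h w : R :=
  \sum_(0 <= i < m.+1) \sum_(0 <= j < n.+1) h i j * cross_diff w i j.

Lemma cross_pairing_split m n h u v w : (forall i j, u i j = v i j + w i j) ->
  cross_pairing m n h u = cross_pairing m n h v + cross_pairing m n h w.
Proof.
move=> uE; rewrite -big_split; apply: eq_bigr => i _.
rewrite -big_split; apply: eq_bigr => j _ /=.
by rewrite /cross_diff !uE; ring.
Qed.

Lemma cross_pairing_by_parts m n h w :
  (forall j, w 0%N j = 0) -> (forall i, w i 0%N = 0) ->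
  (forall j, w m.+1 j = 0) -> (forall i, w i n.+1 = 0) ->
  cross_pairing m n h w
  = \sum_(0 <= i < m) \sum_(0 <= j < n) cross_diff h i j * w i.+1 j.+1.
Proof.
move=> w0j wi0 wmj win.
have sum_w01 : \sum_(0 <= i < m.+1) \sum_(0 <= j < n.+1) h i j * w i j.+1
    = \sum_(0 <= i < m) \sum_(0 <= j < n) h i.+1 j * w i.+1 j.+1.
  rewrite sum_nat_recl0 /=; last by rewrite big1 // => j _; rewrite w0j mulr0.
  by apply: eq_bigr => i _; rewrite sum_nat_recr0 // win mulr0.
have sum_w10 : \sum_(0 <= i < m.+1) \sum_(0 <= j < n.+1) h i j * w i.+1 j
    = \sum_(0 <= i < m) \sum_(0 <= j < n) h i j.+1 * w i.+1 j.+1.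
  rewrite sum_nat_recr0 /=; last by rewrite big1 // => j _; rewrite wmj mulr0.
  by apply: eq_bigr => i _; rewrite sum_nat_recl0 // wi0 mulr0.
have sum_w00 : \sum_(0 <= i < m.+1) \sum_(0 <= j < n.+1) h i j * w i j
    = \sum_(0 <= i < m) \sum_(0 <= j < n) h i.+1 j.+1 * w i.+1 j.+1.
  by rewrite sum_grid_recl0 // => [j | i]; rewrite ?w0j ?wi0 mulr0.
have sum_w11 : \sum_(0 <= i < m.+1) \sum_(0 <= j < n.+1) h i j * w i.+1 j.+1
    = \sum_(0 <= i < m) \sum_(0 <= j < n) h i j * w i.+1 j.+1.
  by rewrite sum_grid_recr0 // => [j | i]; rewrite ?wmj ?win mulr0.
rewrite /cross_pairing /cross_diff.
under eq_bigr => i _ do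
  [under eq_bigr => j _ do rewrite !mulrBr mulrDr; rewrite !sumrB big_split /=].
under [RHS]eq_bigr => i _ do
  [under eq_bigr => j _ do rewrite !mulrBl mulrDl; rewrite !sumrB big_split /=].
by rewrite !sumrB !big_split /= sum_w01 sum_w10 sum_w00 sum_w11; ring.
Qed.

End CrossPairing.

Section ExtendedIdeal.
Variables a b : nat.
Implicit Types (I : {set elt a b}) (x y : elt a b).

Lemma idealP I x y : is_ideal I -> y \in I -> Defs.leP x y -> x \in I.
Proof. by move=> /forallP/(_ x)/forallP/(_ y)/implyP idI yI xy; apply: idI; rewrite yI. Qed.

Definition mem_at I (i j : nat) : bool :=
  [exists x in I, (x.1 == i :> nat) && (x.2 == j :> nat)].

Lemma mem_atE I x : mem_at I x.1 x.2 = (x \in I).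
Proof.
apply/existsP/idP => [[y /and3P [yI /eqP y1 /eqP y2]] | xI]; last first.
  by exists x; rewrite xI !eqxx.
suff -> : x = y by [].
by case: x y y1 y2 {yI} => [? ?] [? ?] /= /val_inj -> /val_inj ->.
Qed.

Lemma mem_at_bound I i j : mem_at I i j -> (i < a)%N && (j < b)%N.
Proof. by case/existsP => x /and3P [_ /eqP <- /eqP <-]; rewrite !ltn_ord. Qed.

Lemma mem_at_beyond_a I j : mem_at I a j = false.
Proof. by apply/negbTE/negP => /mem_at_bound; rewrite ltnn. Qed.

Lemma mem_at_beyond_b I i : mem_at I i b = false.
Proof. by apply/negbTE/negP => /mem_at_bound; rewrite ltnn andbF. Qed.

Lemma mem_at_set0 i j : mem_at set0 i j = false.
Proof. by apply/negbTE/existsP => -[x]; rewrite inE. Qed.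

Lemma mem_at_down I i j i' j' : is_ideal I ->
  (i' <= i)%N -> (j' <= j)%N -> mem_at I i j -> mem_at I i' j'.
Proof.
move=> idI le_i le_j /existsP [x /and3P [xI /eqP x1 /eqP x2]].
have lt_i : (i' < a)%N by rewrite (leq_ltn_trans le_i) // -x1.
have lt_j : (j' < b)%N by rewrite (leq_ltn_trans le_j) // -x2.
apply/existsP; exists (Ordinal lt_i, Ordinal lt_j); rewrite !eqxx !andbT.
by apply: idealP idI xI _; rewrite /Defs.leP /= x1 x2 le_i le_j.
Qed.

Definition ext_ideal I (i j : nat) : bool :=
  match i, j with
  | 0, _ => (j <= b)%N
  | i.+1, 0 => (i < a)%N
  | i.+1, j.+1 => mem_at I i j
  end.

Lemma ext_ideal_beyond_a I j : ext_ideal I a.+1 j = false.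
Proof. by case: j => [|j] /=; rewrite ?ltnn ?mem_at_beyond_a. Qed.

Lemma ext_ideal_beyond_b I i : ext_ideal I i b.+1 = false.
Proof. by case: i => [|i] /=; rewrite ?ltnn ?mem_at_beyond_b. Qed.

Lemma ext_ideal_col0 I i : ext_ideal I i 0 = (i <= a)%N.
Proof. by case: i. Qed.

Lemma ext_ideal_downr I i j : is_ideal I -> ext_ideal I i j.+1 -> ext_ideal I i j.
Proof.
move=> idI; case: i => [|i] /=; first exact: ltnW.
case: j => [|j] /=; first by case/mem_at_bound/andP.
exact: mem_at_down idI (leqnn _) (leqnSn _).
Qed.

Lemma ext_ideal_downl I i j : is_ideal I -> ext_ideal I i.+1 j -> ext_ideal I i j.
Proof.
move=> idI; case: j => [|j] /=; first by case: i => [|i] //= /ltnW.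
case: i => [|i] /=; first by case/mem_at_bound/andP.
exact: mem_at_down idI (leqnSn _) (leqnn _).
Qed.

Definition addable I i j :=
  [&& ext_ideal I i j.+1, ext_ideal I i.+1 j & ~~ ext_ideal I i.+1 j.+1].

Definition removable I i j :=
  [&& ext_ideal I i j, ~~ ext_ideal I i j.+1 & ~~ ext_ideal I i.+1 j].

Lemma minimal_out_addable I x : is_ideal I -> minimal_out x I = addable I x.1 x.2.
Proof.
move=> idI; case: x => x1 x2; rewrite /minimal_out /addable.
rewrite -[ext_ideal I x1.+1 x2.+1]/(mem_at I (x1, x2).1 (x1, x2).2) mem_atE.
have -> : ext_ideal I x1 x2.+1 = (x1 == 0 :> nat) || mem_at I x1.-1 x2.
  by case: x1 => [[|i] ?] /=; rewrite ?ltn_ord.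
have -> : ext_ideal I x1.+1 x2 = (x2 == 0 :> nat) || mem_at I x1 x2.-1.
  by case: x2 => [[|j] ?] /=; rewrite ?ltn_ord.
case: ((x1, x2) \in I); rewrite /= ?andbF ?andbT //.
apply/forallP/andP => [minx | [lo1 lo2] [y1 y2]].
  have below i j : (i <= x1)%N -> (j <= x2)%N ->
      ~~ ((i == x1 :> nat) && (j == x2 :> nat)) -> mem_at I i j.
    move=> le_i le_j ne; apply: contraT => notI.
    have lt_i : (i < a)%N := leq_ltn_trans le_i (ltn_ord _).
    have lt_j : (j < b)%N := leq_ltn_trans le_j (ltn_ord _).
    have := minx (Ordinal lt_i, Ordinal lt_j).
    by rewrite -mem_atE /Defs.leP /= notI le_i le_j xpair_eqE (negbTE ne).
  split; case: eqVneq => //= ne0; apply: below; lia.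
apply/implyP => /= /andP [yI /andP [le1 le2]]; rewrite xpair_eqE.
apply: contraR yI => ne; rewrite -mem_atE /=.
have [lt1 | ge1] := ltnP y1 x1.
  case/orP: lo1 => [/eqP x1_0 | ]; first by rewrite x1_0 in lt1.
  by apply: mem_at_down => //; lia.
have [lt2 | ge2] := ltnP y2 x2.
  case/orP: lo2 => [/eqP x2_0 | ]; first by rewrite x2_0 in lt2.
  by apply: mem_at_down => //; lia.
by rewrite /eq_op /= !eqn_leq le1 le2 ge1 ge2 in ne.
Qed.

Lemma maximal_in_removable I x : is_ideal I ->
  maximal_in x I = removable I x.1.+1 x.2.+1.
Proof.
move=> idI; case: x => x1 x2; rewrite /maximal_in /removable /= (mem_atE I (x1, x2)).
case: ((x1, x2) \in I) => //=.
apply/forallP/andP => [maxx | [nj ni] [y1 y2]].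
  split; apply/negP => /existsP [[y1 y2] /and3P [yI /eqP y1E /eqP y2E]];
    have := maxx (y1, y2); rewrite yI /Defs.leP /= y1E y2E leqnn leqnSn /=;
    by move=> /eqP [/(congr1 val) /= + /(congr1 val) /=]; rewrite y1E y2E; lia.
apply/implyP => /= /andP [yI /andP /= [le1 le2]]; apply/contraT => ne.
rewrite -(mem_atE I (y1, y2)) /= in yI.
have [lt1 | ge1] := ltnP x1 y1.
  by move: ni; rewrite (mem_at_down idI lt1 le2 yI).
have [lt2 | ge2] := ltnP x2 y2.
  by move: nj; rewrite (mem_at_down idI le1 lt2 yI).
by rewrite xpair_eqE /eq_op /= !eqn_leq le1 le2 ge1 ge2 in ne.
Qed.

Lemma toggleE (R : realType) I x : is_ideal I ->
  toggle x I = (addable I x.1 x.2)%:R - (removable I x.1.+1 x.2.+1)%:R :> R.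
Proof.
by move=> idI; rewrite /toggle /Tplus /Tminus minimal_out_addable ?maximal_in_removable.
Qed.

Lemma addable_sub_removable (R : comPzRingType) I i j : is_ideal I ->
  (addable I i j)%:R - (removable I i j)%:R
  = cross_diff (fun i j => (ext_ideal I i j)%:R : R) i j.
Proof.
move=> idI; have square (p q r s : bool) : q ==> p -> r ==> p -> s ==> q -> s ==> r ->
    [&& q, r & ~~ s]%:R - [&& p, ~~ q & ~~ r]%:R = q%:R + r%:R - p%:R - s%:R :> R.
  by case: p q r s => [] [] [] [] //= *; ring.
by apply: square; apply/implyP; [exact: ext_ideal_downr | exact: ext_ideal_downl
  | exact: ext_ideal_downl | exact: ext_ideal_downr].
Qed.

Lemma removable_row0 I j : removable I 0 j -> j = b.
Proof. by case/and3P => /= ? ? _; lia. Qed.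

Lemma removable_col0 I i : removable I i 0 -> i = a.
Proof. by case/and3P; rewrite !ext_ideal_col0 => ? _ ?; lia. Qed.

Lemma ideal_set0 : is_ideal (set0 : {set elt a b}).
Proof. by apply/forallP => x; apply/forallP => y; rewrite inE. Qed.

Lemma toggle_set0 (R : realType) x :
  toggle x set0 = ((x.1 == 0 :> nat) && (x.2 == 0 :> nat))%:R :> R.
Proof.
rewrite toggleE ?ideal_set0 // /addable /removable.
by case: x => [[[|i] lt_i] [[|j] lt_j]] /=; rewrite ?mem_at_set0 ?lt_i ?lt_j ?subr0 ?subrr.
Qed.

Definition shifted_ideal I i j : bool :=
  match i, j with i.+1, j.+1 => mem_at I i j | _, _ => false end.

Lemma ext_ideal_split (R : pzSemiRingType) I i j :
  (ext_ideal I i j)%:R = (ext_ideal set0 i j)%:R + (shifted_ideal I i j)%:R :> R.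
Proof. by case: i j => [|i] [|j]; rewrite /= ?mem_at_set0 ?addr0 ?add0r. Qed.

End ExtendedIdeal.

Definition content (i j : nat) : int := j%:Z - i%:Z.

Lemma contentSS i j : content i.+1 j.+1 = content i j.
Proof. rewrite /content; lia. Qed.

Definition laplacian (R : zmodType) (g : int -> R) (d : int) : R :=
  g (d + 1) + g (d - 1) - g d *+ 2.

Lemma cross_diff_content (R : comPzRingType) (g : int -> R) i j :
  cross_diff (fun i j => g (content i j)) i j = laplacian g (content i j).
Proof.
rewrite /cross_diff /laplacian contentSS.
have -> : content i j.+1 = content i j + 1 by rewrite /content; lia.
have -> : content i.+1 j = content i j - 1 by rewrite /content; lia.
by rewrite mulr2n opprD addrA.
Qed.

Lemma sum_toggle_cross (R : realType) a b (g : int -> R) I :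
  g b%:Z = 0 -> g (- a%:Z) = 0 -> is_ideal I ->
  \sum_(x : elt a b) g (content x.1 x.2) * toggle x I
  = cross_pairing a b (fun i j => g (content i j)) (fun i j => (ext_ideal I i j)%:R).
Proof.
move=> g_b g_a idI.
under eq_bigr => x _ do rewrite toggleE // mulrBr.
rewrite sumrB (sum_elt (fun i j => g (content i j) * (addable I i j)%:R)).
rewrite (sum_elt (fun i j => g (content i j) * (removable I i.+1 j.+1)%:R)).
rewrite -(sum_grid_recr0 (F := fun i j => g (content i j) * (addable I i j)%:R))
  => [|j|i]; first last.
- by rewrite /addable ext_ideal_beyond_b mulr0.
- by rewrite /addable ext_ideal_beyond_a andbF mulr0.
under [X in _ - X]eq_bigr => i _ do under eq_bigr => j _ do rewrite -contentSS.
rewrite -(sum_grid_recl0 (F := fun i j => g (content i j) * (removable I i j)%:R))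
  => [|j|i].
- rewrite /cross_pairing -sumrB; apply: eq_bigr => i _.
  by rewrite -sumrB; apply: eq_bigr => j _; rewrite -mulrBr addable_sub_removable.
- case: (boolP (removable I 0 j)) => [/removable_row0 -> | _]; last by rewrite mulr0.
  by rewrite /content subr0 g_b mul0r.
- case: (boolP (removable I i 0)) => [/removable_col0 -> | _]; last by rewrite mulr0.
  by rewrite /content sub0r g_a mul0r.
Qed.

Lemma sum_toggle_set0 (R : realType) a b (F : nat -> nat -> R) :
  (0 < a)%N -> (0 < b)%N ->
  \sum_(x : elt a b) F x.1 x.2 * toggle x set0 = F 0%N 0%N.
Proof.
case: a b => [|a] [|b] // _ _.
under eq_bigr => x _ do rewrite toggle_set0.
rewrite (sum_elt (fun i j => F i j * ((i == 0%N) && (j == 0%N))%:R)).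
rewrite big_nat_recl // big_nat_recl //= mulr1.
rewrite big1 => [|j _]; last by rewrite mulr0.
by rewrite big1 ?addr0 // => i _; rewrite big1 // => j _; rewrite mulr0.
Qed.

Lemma sum_toggle_content (R : realType) a b (g : int -> R) I :
  (0 < a)%N -> (0 < b)%N -> g b%:Z = 0 -> g (- a%:Z) = 0 -> is_ideal I ->
  \sum_(x : elt a b) g (content x.1 x.2) * toggle x I
  = g 0 + \sum_(x : elt a b) laplacian g (content x.1 x.2) * indic x I.
Proof.
move=> a_gt0 b_gt0 g_b g_a idI.
rewrite sum_toggle_cross // (cross_pairing_split _ _ _ (ext_ideal_split R I)).
rewrite -sum_toggle_cross ?ideal_set0 // (sum_toggle_set0 (fun i j => g (content i j))) //.
congr (_ + _).
rewrite cross_pairing_by_parts => [|j|i|j|i]; last 4 first.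
- by [].
- by case: i.
- by case: j => [|j] //=; rewrite mem_at_beyond_a.
- by case: i => [|i] //=; rewrite mem_at_beyond_b.
under [RHS]eq_bigr => x _ do rewrite /indic -mem_atE.
rewrite (sum_elt (fun i j => laplacian g (content i j) * (mem_at I i j)%:R)).
by apply: eq_bigr => i _; apply: eq_bigr => j _; rewrite cross_diff_content.
Qed.

(* The Green function of the second difference on [-a, b] with pole k:
   piecewise linear, zero at -a and at b, with a unit kink at k. *)
Definition green (R : numFieldType) (a b : nat) (k d : int) : R :=
  if d <= k then - ((d%:~R + a%:R) * (b%:R - k%:~R)) / (a + b)%:R
  else - ((k%:~R + a%:R) * (b%:R - d%:~R)) / (a + b)%:R.

Lemma green_laplacian (R : numFieldType) a b k d : (0 < a + b)%N ->
  laplacian (green R a b k) d = (d == k)%:R.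
Proof.
move=> ab_gt0; have : (a + b)%:R != 0 :> R by rewrite pnatr_eq0 -lt0n.
rewrite /laplacian /green natrD => ab_neq0; rewrite !rmorphD !rmorphN rmorph1.
have [lt_dk | gt_dk | ->] := ltgtP d k.
- have -> : (d + 1 <= k) = true by lia.
  have -> : (d - 1 <= k) = true by lia.
  by rewrite /= mulr2n; field.
- have -> : (d + 1 <= k) = false by apply/negbTE; rewrite -ltNge; lia.
  case: ifP => [le_dk | _]; last by rewrite /= mulr2n; field.
  have -> : d = k + 1 by lia.
  by rewrite rmorphD rmorph1 /= mulr2n; field.
- have -> : (k + 1 <= k) = false by apply/negbTE; rewrite -ltNge; lia.
  have -> : (k - 1 <= k) = true by lia.
  by rewrite /= mulr2n; field.
Qed.

Lemma green_at_b (R : numFieldType) a b k : k < b%:Z -> green R a b k b = 0.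
Proof. by move=> lt_kb; rewrite /green leNgt lt_kb /= subrr mulr0 oppr0 mul0r. Qed.

Lemma green_at_neg_a (R : numFieldType) a b k :
  - a%:Z <= k -> green R a b k (- a%:Z) = 0.
Proof. by move=> le_ak; rewrite /green le_ak intrN addNr mul0r oppr0 mul0r. Qed.

Theorem theorem3p10 (R : realType) (a b : nat) (k : int) :
  (1 <= a)%N -> (1 <= b)%N -> 1 - (a%:Z) <= k -> k <= (b%:Z) - 1 ->
  stat_equiv
    (fun I : {set elt a b} =>
       \sum_(p : elt a b | (p.2)%:Z - (p.1)%:Z == k) (indic p I : R))
    (fun _ => if 0 <= k
              then (a%:R * (b%:R - k%:~R)) / (a + b)%:R
              else (b%:R * (a%:R + k%:~R)) / (a + b)%:R).
Proof.
move=> a_gt0 b_gt0 k_ge k_le.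
exists (fun x : elt a b => green R a b k (content x.1 x.2)) => I idI.
have g_b : green R a b k b = 0 by apply: green_at_b; lia.
have g_a : green R a b k (- a%:Z) = 0 by apply: green_at_neg_a; lia.
rewrite sum_toggle_content //.
under [in RHS]eq_bigr => x _ do rewrite green_laplacian ?addn_gt0 ?a_gt0 // mulr_natl mulrb.
rewrite -big_mkcond /= addrC; congr (_ + _).
by rewrite /green; case: ifP => _; rewrite mulNr rmorph0; congr (- (_ / _)); ring.
Qed.
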